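(* Let $k\ge1$, let $\mathcal{H}$ be a separable infinite-dimensional complex Hilbert space with orthonormal basis $\{e_n\}_{n\ge0}$, and let $\alpha_0,\dots,\alpha_k\in\mathbb{C}$ with $\sum_{i=0}^k|\alpha_i|^2<1$. Let $T$ be the operator on $\mathcal{H}$ given by $Te_0=\alpha_0e_0+\alpha_1e_1+\cdots+\alpha_ke_k$ and $Te_n=e_{n+k}$ for $n\ge1$ (so $T$ is a completely non-unitary contraction with $\dim\mathcal{D}_T=1$, $\mathcal{D}_T\subseteq\mathcal{D}_{T^*}$, $\dim\mathcal{D}_{T^*}<\infty$). Then $T$ is analytic if and only if either $\alpha_0=0$ or $\alpha_j\neq0$ for some $1\le j\le k$.
   Context: For a contraction $T$ on $\mathcal{H}$, $\mathcal{D}_T=\overline{(I-T^*T)^{1/2}\mathcal{H}}$ and $\mathcal{D}_{T^*}=\overline{(I-TT^* )^{1/2}\mathcal{H}}$. A contraction is completely non-unitary if it has no nonzero reducing subspace on which it is unitary. $T$ is analytic if $\bigcap_{m\ge1}T^m\mathcal{H}=\{0\}$. *)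

From Stdlib Require Import Reals Arith.
From Coquelicot Require Import Coquelicot.
Open Scope R_scope.

(* The model Hilbert space: l^2(N, C), with orthonormal basis e_n = delta_n.
   Every separable infinite-dimensional complex Hilbert space with an
   orthonormal basis (e_n) is unitarily identified with l^2 via e_n |-> delta_n. *)
Definition l2 (x : nat -> C) : Prop := ex_series (fun n => (Cmod (x n)) ^ 2).

(* The operator T with T e_0 = alpha_0 e_0 + ... + alpha_k e_k and
   T e_n = e_{n+k} for n >= 1, extended by linearity and continuity:
   for x = sum_n x_n e_n,  (T x)_j = alpha_j x_0  for j <= k,
                           (T x)_j = x_{j-k}      for j > k. *)
Definition Top (k : nat) (alpha : nat -> C) (x : nat -> C) : nat -> C :=
  fun j => if Nat.leb j k then Cmult (alpha j) (x 0%nat) else x (j - k)%nat.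

Definition in_range_pow (T : (nat -> C) -> (nat -> C)) (m : nat) (x : nat -> C) : Prop :=
  exists y, l2 y /\ Nat.iter m T y = x.

Definition analytic (T : (nat -> C) -> (nat -> C)) : Prop :=
  forall x : nat -> C, l2 x ->
    (forall m : nat, (1 <= m)%nat -> in_range_pow T m x) ->
    forall n, x n = 0%C.

From Stdlib Require Import Reals Arith Lia Lra Classical FunctionalExtensionality.
From Coquelicot Require Import Coquelicot.
Open Scope R_scope.

(* T sends e_0 to alpha_0 e_0 + ... + alpha_k e_k and shifts every other e_n
   by k, so (T^m y)_0 = alpha_0^m y_0 and (T^(q+1) y)_(r+qk) = alpha_r y_0 for
   1 <= r <= k.  If alpha_0 <> 0 = alpha_1 = ... = alpha_k, T maps the line
   through e_0 onto itself, so e_0 lies in every T^m H.  Conversely, let x lie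
   in every T^m H.  Comparing the two formulas for the same y gives
   |alpha_j x_0| = |alpha_0|^(q+1) |x_(j+qk)| <= |x_(j+qk)|, which tends to 0;
   so x_0 = 0 once some alpha_j <> 0 (and trivially when alpha_0 = 0).  Writing
   x = T^(q+1) (Ty), both 0 = x_0 = alpha_0^(q+1) (Ty)_0 and (Ty)_0 = alpha_0 y_0
   hold, so (Ty)_0 = 0 and x_(r+qk) = alpha_r (Ty)_0 vanishes as well. *)

Lemma div_offset_decomp (k n : nat) : (1 <= k)%nat -> (1 <= n)%nat ->
  exists q r, (1 <= r <= k)%nat /\ n = (r + q * k)%nat.
Proof.
  intros Hk Hn. exists ((n - 1) / k)%nat, ((n - 1) mod k + 1)%nat.
  assert (Hmod := Nat.mod_upper_bound (n - 1) k ltac:(lia)).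
  assert (Hdiv := Nat.div_mod_eq (n - 1) k).
  split; nia.
Qed.

Lemma sum_f_R0_ge_0th (f : nat -> R) (N : nat) :
  (forall n, 0 <= f n) -> f 0%nat <= sum_f_R0 f N.
Proof.
  intros Hf. destruct N as [|N]; [simpl; lra|].
  rewrite decomp_sum by lia. simpl Nat.pred.
  assert (0 <= sum_f_R0 (fun i => f (S i)) N) by (apply cond_pos_sum; auto).
  lra.
Qed.

Lemma ex_series_0 : ex_series (fun _ : nat => 0).
Proof.
  exists 0. apply filterlim_ext with (fun _ => 0).
  - intros n. rewrite sum_n_const. ring.
  - apply filterlim_const.
Qed.

Lemma l2_coord_vanishing (x : nat -> C) : l2 x ->
  forall eps, 0 < eps -> exists N, forall n, (N <= n)%nat -> Cmod (x n) < eps.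
Proof.
  intros Hx eps Heps.
  assert (Hlim := ex_series_lim_0 _ Hx). apply is_lim_seq_spec in Hlim.
  destruct (Hlim (mkposreal (eps * eps) ltac:(nra))) as [N HN].
  exists N. intros n Hn. specialize (HN n Hn); simpl in HN.
  rewrite Rminus_0_r, Rabs_pos_eq in HN by apply pow2_ge_0.
  assert (0 <= Cmod (x n)) by apply Cmod_ge_0. nra.
Qed.

Definition e0 (c : C) : nat -> C := fun n => match n with O => c | S _ => 0%C end.

Lemma l2_e0 (c : C) : l2 (e0 c).
Proof.
  apply ex_series_incr_1, (ex_series_ext (fun _ => 0)); [|exact ex_series_0].
  intros n. simpl. rewrite Cmod_0. ring.
Qed.

Lemma in_range_pow_of_onto (T : (nat -> C) -> nat -> C) (P : (nat -> C) -> Prop) :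
  (forall x, P x -> l2 x) -> (forall x, P x -> exists y, P y /\ T y = x) ->
  forall m x, P x -> in_range_pow T m x.
Proof.
  intros Hl2 Honto m. induction m as [|m IH]; intros x Hx.
  - exists x. split; auto.
  - destruct (Honto x Hx) as [y [Hy <-]].
    destruct (IH y Hy) as [z [Hz <-]].
    exists z. split; auto.
Qed.

Section Top_coordinates.

Variables (k : nat) (alpha : nat -> C).
Notation T := (Top k alpha).

Lemma Top_0 (z : nat -> C) : T z 0%nat = (alpha 0%nat * z 0%nat)%C.
Proof. reflexivity. Qed.

Lemma Top_low (z : nat -> C) (j : nat) : (1 <= j <= k)%nat ->
  T z j = (alpha j * z 0%nat)%C.
Proof.
  intros Hj. unfold Top. replace (Nat.leb j k) with true; auto.
  symmetry; apply Nat.leb_le; lia.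
Qed.

Lemma Top_shift (z : nat -> C) (n : nat) : (1 <= n)%nat -> T z (n + k)%nat = z n.
Proof.
  intros Hn. unfold Top. replace (Nat.leb (n + k) k) with false.
  - f_equal; lia.
  - symmetry; apply Nat.leb_gt; lia.
Qed.

Lemma iter_Top_0 (m : nat) (z : nat -> C) :
  Nat.iter m T z 0%nat = (alpha 0%nat ^ m * z 0%nat)%C.
Proof.
  induction m as [|m IH]; simpl.
  - ring.
  - rewrite Top_0, IH. ring.
Qed.

Lemma iter_Top_shift (p : nat) (z : nat -> C) (n : nat) : (1 <= n)%nat ->
  Nat.iter p T z (n + p * k)%nat = z n.
Proof.
  intros Hn. induction p as [|p IH]; simpl.
  - f_equal; lia.
  - replace (n + (k + p * k))%nat with (n + p * k + k)%nat by lia.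
    rewrite Top_shift by lia. exact IH.
Qed.

Lemma iter_Top_low (q : nat) (z : nat -> C) (r : nat) : (1 <= r <= k)%nat ->
  Nat.iter (S q) T z (r + q * k)%nat = (alpha r * z 0%nat)%C.
Proof.
  intros Hr. rewrite <- Nat.add_1_r, Nat.iter_add, iter_Top_shift by lia.
  apply Top_low; auto.
Qed.

Lemma Top_e0 (c : C) : (forall j, (1 <= j <= k)%nat -> alpha j = 0%C) ->
  T (e0 c) = e0 (alpha 0%nat * c).
Proof.
  intros Hzero. apply functional_extensionality. intros [|j]; [reflexivity|].
  destruct (le_lt_dec (S j) k).
  - rewrite Top_low, Hzero by lia. simpl. ring.
  - replace (S j) with (S (j - k) + k)%nat by lia.
    rewrite Top_shift by lia. reflexivity.
Qed.

Lemma Top_not_analytic : alpha 0%nat <> 0%C ->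
  (forall j, (1 <= j <= k)%nat -> alpha j = 0%C) -> ~ analytic T.
Proof.
  intros Ha0 Hzero Han.
  assert (Hline : forall m x, (exists c, x = e0 c) -> in_range_pow T m x).
  { apply in_range_pow_of_onto.
    - intros x [c ->]. apply l2_e0.
    - intros x [c ->]. exists (e0 (c / alpha 0%nat)). split; eauto.
      rewrite Top_e0 by exact Hzero. f_equal. field. exact Ha0. }
  apply C1_nz. change (e0 1%C 0%nat = 0%C). apply (Han (e0 1%C) (l2_e0 _)).
  intros m _. apply Hline. exists 1%C. reflexivity.
Qed.

Section Range_intersection.

Variable x : nat -> C.
Hypothesis x_in_ranges : forall m, (1 <= m)%nat -> in_range_pow T m x.

Lemma in_ranges_coord_bound (j q : nat) : (1 <= j <= k)%nat ->
  Cmod (alpha 0%nat) <= 1 -> Cmod (alpha j * x 0%nat) <= Cmod (x (j + q * k)%nat).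
Proof.
  intros Hj Ha0.
  destruct (x_in_ranges (S q) ltac:(lia)) as [y [_ Hy]].
  assert (Hcomp : (alpha j * x 0%nat = alpha 0%nat ^ S q * x (j + q * k)%nat)%C).
  { rewrite <- Hy, iter_Top_0, iter_Top_low by exact Hj. ring. }
  rewrite Hcomp, Cmod_mult, Cmod_pow.
  assert (Cmod (alpha 0%nat) ^ S q <= 1)
    by (rewrite <- (pow1 (S q)); apply pow_incr; split; [apply Cmod_ge_0|exact Ha0]).
  assert (0 <= Cmod (x (j + q * k)%nat)) by apply Cmod_ge_0.
  nra.
Qed.

Lemma in_ranges_coord0 : l2 x -> Cmod (alpha 0%nat) <= 1 ->
  (alpha 0%nat = 0%C \/ exists j, (1 <= j <= k)%nat /\ alpha j <> 0%C) ->
  x 0%nat = 0%C.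
Proof.
  intros Hx Ha0 [Hzero | [j [Hj Haj]]].
  - destruct (x_in_ranges 1 (le_n _)) as [y [_ <-]].
    simpl. rewrite Top_0, Hzero. ring.
  - apply NNPP. intros Hx0.
    assert (Hpos : 0 < Cmod (alpha j * x 0%nat))
      by (apply Cmod_gt_0, Cmult_neq_0; assumption).
    destruct (l2_coord_vanishing x Hx _ Hpos) as [N HN].
    assert (Hsmall := HN (j + N * k)%nat ltac:(nia)).
    assert (Hbig := in_ranges_coord_bound j N Hj Ha0).
    lra.
Qed.

Lemma in_ranges_eq0 : (1 <= k)%nat -> x 0%nat = 0%C -> forall n, x n = 0%C.
Proof.
  intros Hk Hx0 [|n]; [exact Hx0|].
  destruct (div_offset_decomp k (S n) Hk ltac:(lia)) as [q [r [Hr ->]]].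
  destruct (x_in_ranges (S (S q)) ltac:(lia)) as [y [_ Hy]].
  assert (Hsplit : x = Nat.iter (S q) T (T y))
    by (rewrite <- Hy, <- Nat.iter_succ_r; reflexivity).
  assert (HTy0 : T y 0%nat = 0%C).
  { destruct (classic (alpha 0%nat = 0%C)) as [Ha0 | Ha0].
    - rewrite Top_0, Ha0. ring.
    - apply NNPP. intros HTy0. apply (Cmult_neq_0 _ _ (Cpow_nz _ (S q) Ha0) HTy0).
      rewrite <- iter_Top_0, <- Hsplit. exact Hx0. }
  rewrite Hsplit, iter_Top_low, HTy0 by exact Hr. ring.
Qed.

End Range_intersection.

End Top_coordinates.

Theorem corollary4p6 (k : nat) (alpha : nat -> C) :
  (1 <= k)%nat ->
  sum_f_R0 (fun i => (Cmod (alpha i)) ^ 2) k < 1 ->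
  (analytic (Top k alpha) <->
   (alpha 0%nat = 0%C \/ exists j : nat, (1 <= j <= k)%nat /\ alpha j <> 0%C)).
Proof.
  intros Hk Hsum. split.
  - intros Han. apply NNPP. intros Hnot.
    apply (Top_not_analytic k alpha); [tauto | | exact Han].
    intros j Hj. apply NNPP. intros Haj. apply Hnot. right. eauto.
  - intros Hcase x Hx Hranges.
    assert (Ha0 : Cmod (alpha 0%nat) <= 1).
    { assert (Cmod (alpha 0%nat) ^ 2 <= sum_f_R0 (fun i => Cmod (alpha i) ^ 2) k)
        by (apply (sum_f_R0_ge_0th (fun i => Cmod (alpha i) ^ 2)); intros; apply pow2_ge_0).
      assert (0 <= Cmod (alpha 0%nat)) by apply Cmod_ge_0.
      nra. }
    apply (in_ranges_eq0 k alpha x Hranges Hk).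
    exact (in_ranges_coord0 k alpha x Hranges Hx Ha0 Hcase).
Qed.
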